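(* Let $p$ be a prime and $k,\ell$ integers with $k>0$, $\ell\ge 0$; put $q=p^k$ and $Q=p^{\ell}$. Then the following are equivalent: (1) $\gcd(q-1,Q+1)=1$, or equivalently $p=2$ and $\operatorname{ord}_2(k)\le\operatorname{ord}_2(\ell)$; (2) $f_1(X)=X^{q^2Q+q}+X^{qQ+q^2}+X^{Q+1}$ permutes $\mathbb{F}_{q^3}$; (3) $f_2(X)=X^{q^2Q+1}+X^{qQ+1}+X^{Q+q^2}+X^{Q+q}-X^{Q+1}$ permutes $\mathbb{F}_{q^3}$; (4) $f_3(X)=X^{q^2Q+q}+X^{qQ+q}+X^{Q+q^2}-X^{Q+q}+X^{Q+1}$ permutes $\mathbb{F}_{q^3}$; (5) $f_4(X)=X^{q^2Q+q^2}+X^{qQ+q^2}-X^{Q+q^2}+X^{Q+q}+X^{Q+1}$ permutes $\mathbb{F}_{q^3}$.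
   Context: A polynomial permutes $\mathbb{F}_{q^3}$ if the induced map $\mathbb{F}_{q^3}\to\mathbb{F}_{q^3}$ is a bijection. For a nonzero integer $N$, $\operatorname{ord}_2(N)$ is the largest integer $s\ge0$ with $2^s\mid N$, and $\operatorname{ord}_2(0)=\infty$. *)

From HB Require Import structures.
From mathcomp Require Import all_boot all_order all_algebra all_field.
Set Implicit Arguments. Unset Strict Implicit. Unset Printing Implicit Defensive.
Import GRing.Theory.
Local Open Scope ring_scope.

Definition permutes (F : finFieldType) (f : {poly F}) : Prop :=
  bijective (fun x : F => f.[x]).

(* 2-adic valuation with ord_2(0) = infinity:  None encodes infinity. *)
Definition ord2 (n : nat) : option nat :=
  if n == 0%N then None else Some (logn 2 n).

Definition ord_le (a b : option nat) : Prop :=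
  match a, b with
  | _, None => True
  | None, Some _ => False
  | Some x, Some y => (x <= y)%N
  end.

Section Polys.
Variables (F : finFieldType) (q Q : nat).
Definition f1 : {poly F} := 'X^(q^2*Q + q) + 'X^(q*Q + q^2) + 'X^(Q + 1).
Definition f2 : {poly F} :=
  'X^(q^2*Q + 1) + 'X^(q*Q + 1) + 'X^(Q + q^2) + 'X^(Q + q) - 'X^(Q + 1).
Definition f3 : {poly F} :=
  'X^(q^2*Q + q) + 'X^(q*Q + q) + 'X^(Q + q^2) - 'X^(Q + q) + 'X^(Q + 1).
Definition f4 : {poly F} :=
  'X^(q^2*Q + q^2) + 'X^(q*Q + q^2) - 'X^(Q + q^2) + 'X^(Q + q) + 'X^(Q + 1).
End Polys.

(* If p is odd, 2 divides both p^k - 1 and p^l + 1.  For p = 2, a common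
   divisor of 2^k - 1 and 2^l + 1 divides 2^gcd(k, 2l) - 1, which divides
   2^l - 1 when ord_2 k <= ord_2 l; otherwise the Fermat number 2^(2^v) + 1,
   v = ord_2 l, divides both.

   If g = gcd(q - 1, Q + 1) > 1, every exponent of f_i is congruent to
   Q + 1 = 0 modulo g, so f_i takes the same value at 1 and at a primitive
   g-th root of unity.

   Conversely (then p = 2), put x_i = x^(q^i) and y_i = x_i^Q.  Each f_i(x) is
   T^(Q+1) + U_i(r, r^(Q)), where T = x_0 + x_1 + x_2 is the trace to F_q,
   r = (x_1 + x_2) + (x_2 + x_0) w lies in F[w] with w^2 + w + 1 = 0, and
   r^(Q) raises the coordinates of r to the power Q; moreover the conjugates
   f_i(x), f_i(x)^q, f_i(x)^(q^2) determine r r^(Q).  For an even l' = l mod 3k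
   this twisted norm is the power map r |-> r^(2^l' + 1) of F[w], which is
   injective since 2^l' + 1 is prime to 2^M - 1 for a suitable even multiple
   M of 3k, while r^(2^M) = r.  So f_i(x) determines r, then T^(Q+1) and T
   (as Q + 1 is prime to q - 1), and finally x = T + x_1 + x_2. *)

From HB Require Import structures.
From mathcomp Require Import all_boot all_order all_algebra all_field.
From mathcomp Require Import ring.

Set Implicit Arguments.
Unset Strict Implicit.
Unset Printing Implicit Defensive.

Lemma dvdn_addn1_expn_odd x o : odd o -> x + 1 %| x ^ o + 1.
Proof.
move=> o_odd; rewrite -(odd_double_half o) o_odd -mul2n expnS expnM.
have x2 : x ^ 2 = 1 %[mod x + 1].
  case: x => [|x] //; apply/eqP; rewrite eqn_mod_dvd ?expn_gt0 //.
  by rewrite -(exp1n 2) subn_sqr dvdn_mull.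
by rewrite /dvdn -modnDml -modnMmr -modnXm x2 modnXm exp1n modnMmr muln1 modnDml modnn.
Qed.

Lemma expn_modn_gcdn x a b d : 0 < a ->
  x ^ a = 1 %[mod d] -> x ^ b = 1 %[mod d] -> x ^ gcdn a b = 1 %[mod d].
Proof.
move=> a_gt0 xa xb; have [u v def _] := egcdnP b a_gt0.
have xu : x ^ (u * a) = 1 %[mod d] by rewrite mulnC expnM -modnXm xa modnXm exp1n.
have xv : x ^ (v * b) = 1 %[mod d] by rewrite mulnC expnM -modnXm xb modnXm exp1n.
by rewrite -xu def expnD -modnMml xv modnMml mul1n.
Qed.

Lemma gcdn_double_dvdn m n : 0 < m -> logn 2 m <= logn 2 n -> gcdn m n.*2 %| n.
Proof.
move=> m_gt0 le_mn; have [-> | n_gt0] := posnP n; first exact: dvdn0.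
set e := gcdn m n.*2; have e_gt0 : 0 < e by rewrite gcdn_gt0 m_gt0.
have /dvdnP[r def_n2] : e %| n.*2 := dvdn_gcdr m n.*2.
have r_gt0 : 0 < r.
  by move: n_gt0; rewrite !lt0n -double_eq0 def_n2 muln_eq0 negb_or => /andP[].
case r_odd : (odd r).
  have : logn 2 n.*2 <= logn 2 n.
    rewrite def_n2 lognM // (@logn_coprime 2 r) ?coprime2n //.
    exact: leq_trans (dvdn_leq_log 2 m_gt0 (dvdn_gcdl m n.*2)) le_mn.
  by rewrite -mul2n lognM // logn_prime // ltnn.
rewrite -(odd_double_half r) r_odd add0n -!muln2 mulnAC in def_n2.
by move/eqP: def_n2; rewrite eqn_mul2r /= => /eqP ->; apply: dvdn_mull.
Qed.

Lemma fermat_dvdn_gcdn_2expn m n : 0 < n -> logn 2 n < logn 2 m ->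
  2 ^ 2 ^ logn 2 n + 1 %| gcdn (2 ^ m - 1) (2 ^ n + 1).
Proof.
move=> n_gt0 lt_nm; set x := 2 ^ 2 ^ logn 2 n.
have m_gt0 : 0 < m by case: (m) lt_nm; rewrite ?logn0.
have [o o_odd def_n] := pfactor_coprime (isT : prime 2) n_gt0.
rewrite coprime2n in o_odd.
have dv_n : x + 1 %| 2 ^ n + 1 by rewrite def_n mulnC expnM dvdn_addn1_expn_odd.
have dv_m : x + 1 %| 2 ^ m - 1.
  have /dvdnP[j ->] : 2 ^ (logn 2 n).+1 %| m by rewrite pfactor_dvdn.
  rewrite mulnC expnM expnS mulnC expnM -/x !subn1 predn_exp dvdn_mulr //.
  by rewrite -subn1 -(exp1n 2) subn_sqr dvdn_mull.
by rewrite dvdn_gcd dv_m dv_n.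
Qed.

Lemma coprime_2expn_subn1_addn1_logn m n : 0 < m -> logn 2 m <= logn 2 n ->
  coprime (2 ^ m - 1) (2 ^ n + 1).
Proof.
move=> m_gt0 le_mn; rewrite /coprime; set g := gcdn _ _.
have gm : 2 ^ m = 1 %[mod g].
  by apply/eqP; rewrite eqn_mod_dvd ?expn_gt0 // dvdn_gcdl.
have g2n : 2 ^ n.*2 = 1 %[mod g].
  apply/eqP; rewrite eqn_mod_dvd ?expn_gt0 // -mul2n mulnC expnM.
  by rewrite -(exp1n 2) subn_sqr dvdn_mull // dvdn_gcdr.
have gn : 2 ^ n = 1 %[mod g].
  have /dvdnP[j ->] := gcdn_double_dvdn m_gt0 le_mn.
  by rewrite mulnC expnM -modnXm (expn_modn_gcdn m_gt0 gm g2n) modnXm exp1n.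
have g2 : g %| 2.
  by rewrite /dvdn -[2]/(1 + 1) -{1}modnDml -gn modnDml -/(dvdn _ _) dvdn_gcdr.
have g_odd : odd g.
  by rewrite (dvdn_odd (dvdn_gcdl _ _)) // oddB ?expn_gt0 // oddX; case: (m) m_gt0.
by move: g2 => /(dvdn_leq (isT : 0 < 2)); case: (g) g_odd => [|[|[|]]].
Qed.

Lemma coprime_2expn_subn1_addn1 m n : 0 < m ->
  coprime (2 ^ m - 1) (2 ^ n + 1) = (n == 0) || (logn 2 m <= logn 2 n).
Proof.
move=> m_gt0; have [-> | n_gt0] := posnP n.
  by rewrite expn0 coprimen2 oddB ?expn_gt0 // oddX; case: (m) m_gt0.
case: leqP => [le_mn | lt_nm]; first exact: coprime_2expn_subn1_addn1_logn.
apply/negP => /eqP co; have := fermat_dvdn_gcdn_2expn n_gt0 lt_nm.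
by rewrite co dvdn1 addn1 eqSS expn_eq0.
Qed.

Lemma logn2_oddM m n : odd m -> logn 2 (m * n) = logn 2 n.
Proof.
move=> m_odd; have [-> | n_gt0] := posnP n; first by rewrite muln0.
by rewrite lognM ?(@logn_coprime 2 m) ?coprime2n //; case: (m) m_odd.
Qed.

Lemma logn2_gt0 n : 0 < n -> (0 < logn 2 n) = ~~ odd n.
Proof. by move=> n_gt0; rewrite logn_gt0 mem_primes n_gt0 dvdn2. Qed.

Lemma exists_even_exponents k l : 0 < k -> coprime (2 ^ k - 1) (2 ^ l + 1) ->
  exists M l', [/\ ~~ odd M, 3 * k %| M, ~~ odd l', l' = l \/ l' = l + 3 * k
                 & coprime (2 ^ M - 1) (2 ^ l' + 1)].
Proof.
move=> k_gt0; rewrite coprime_2expn_subn1_addn1 // => le_kl.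
have k3_gt0 : 0 < 3 * k by rewrite muln_gt0.
have [k_odd | k_even] := boolP (odd k).
  pose l' := if odd l then l + 3 * k else l.
  have l'_even : ~~ odd l'.
    by rewrite /l'; case: ifP => l_odd; rewrite ?oddD ?oddM l_odd ?k_odd.
  exists (3 * k).*2, l'; split.
  - by rewrite odd_double.
  - by rewrite -muln2 dvdn_mulr.
  - exact: l'_even.
  - by rewrite /l'; case: ifP; [right | left].
  rewrite coprime_2expn_subn1_addn1 ?double_gt0 // -mul2n lognM //.
  rewrite logn2_oddM ?oddM ?k_odd //.
  rewrite logn_prime // (@logn_coprime 2 k) ?coprime2n //.
  by have [// | l'_gt0] := posnP l'; rewrite logn2_gt0.
have l_even : ~~ odd l.
  move: le_kl; have [-> // | l_gt0] := posnP l => /= le_kl.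
  by rewrite -(logn2_gt0 l_gt0) (leq_trans _ le_kl) ?logn2_gt0.
exists (3 * k), l; split => //; first by rewrite oddM.
- by left.
by rewrite coprime_2expn_subn1_addn1 // logn2_oddM.
Qed.

Lemma ord_le_ord2 m n : 0 < m ->
  ord_le (ord2 m) (ord2 n) <-> (n == 0) || (logn 2 m <= logn 2 n).
Proof. by move=> m_gt0; rewrite /ord2 gtn_eqF //; case: (n == 0). Qed.

Lemma gcdn_subn1_addn1_eq1 p k l : prime p -> 0 < k ->
  gcdn (p ^ k - 1) (p ^ l + 1) = 1 <-> p = 2 /\ ord_le (ord2 k) (ord2 l).
Proof.
move=> p_pr k_gt0; have [-> | p_odd] := even_prime p_pr.
  have co_iff := coprime_2expn_subn1_addn1 l k_gt0; rewrite /coprime in co_iff.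
  split=> [/eqP | [_ /(ord_le_ord2 _ k_gt0)]]; last by rewrite -co_iff => /eqP.
  by rewrite co_iff => /(ord_le_ord2 _ k_gt0).
split=> [g1 | [p2]]; last by rewrite p2 in p_odd.
have p_gt0 := prime_gt0 p_pr.
have : 2 %| gcdn (p ^ k - 1) (p ^ l + 1).
  by rewrite dvdn_gcd !dvdn2 oddB ?expn_gt0 ?p_gt0 // oddD !oddX p_odd !orbT.
by rewrite g1.
Qed.

Import GRing.Theory.
Local Open Scope ring_scope.

Lemma exprD_pchar2 (R : comNzRingType) n (x y : R) : 2 \in [pchar R] ->
  (x + y) ^+ (2 ^ n) = x ^+ (2 ^ n) + y ^+ (2 ^ n).
Proof. by move=> pcharR2; rewrite exprDn_pchar // pnatX pnatE // pcharR2. Qed.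

Lemma eq_pchar2 (R : nzRingType) (x y w : R) : 2 \in [pchar R] ->
  x = y + w *+ 2 -> x = y.
Proof. by move=> pcharR2 ->; rewrite mulrn_pchar // addr0. Qed.

Lemma expr_fixed_inj (R : pzRingType) (N e : nat) (r s : R) :
  (0 < N)%N -> (0 < e)%N -> coprime e N.-1 ->
  r ^+ N = r -> s ^+ N = s -> r ^+ e = s ^+ e -> r = s.
Proof.
move=> N_gt0 e_gt0 co rN sN rse.
have fixed (t : R) j : t ^+ N = t -> t ^+ (j * N.-1).+1 = t.
  move=> tN; elim: j => [|j IHj]; first by rewrite expr1.
  by rewrite mulSn -addSn prednK // exprD tN -exprS IHj.
have [u v def _] := egcdnP N.-1 e_gt0; rewrite (eqP co) addn1 in def.
by rewrite -(fixed r v rN) -(fixed s v sN) -def mulnC !exprM rse.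
Qed.

Section OmegaRing.

Variable R : comNzRingType.

(* [(a, b)] stands for [a + b w], where [w ^+ 2 + w + 1 = 0]. *)
Definition omega_ring := (R * R)%type.

HB.instance Definition _ := GRing.Zmodule.on omega_ring.

Definition omega_mul (r s : omega_ring) : omega_ring :=
  (r.1 * s.1 - r.2 * s.2, r.1 * s.2 + r.2 * s.1 - r.2 * s.2).

Fact omega_mulA : associative omega_mul.
Proof. by move=> [a b] [c d] [e f]; congr pair; rewrite /=; ring. Qed.

Fact omega_mulC : commutative omega_mul.
Proof. by move=> [a b] [c d]; congr pair; rewrite /=; ring. Qed.

Fact omega_mul1 : left_id (1, 0) omega_mul.
Proof. by move=> [a b]; congr pair; rewrite /=; ring. Qed.

Fact omega_mulDl : left_distributive omega_mul +%R.
Proof. by move=> [a b] [c d] [e f]; congr pair; rewrite /=; ring. Qed.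

Fact omega_one_neq0 : (1, 0) != 0 :> omega_ring.
Proof. by rewrite xpair_eqE oner_eq0. Qed.

HB.instance Definition _ := GRing.Zmodule_isComNzRing.Build omega_ring
  omega_mulA omega_mulC omega_mul1 omega_mulDl omega_one_neq0.

Lemma omega_mulE (r s : omega_ring) : r * s = omega_mul r s.
Proof. by []. Qed.

Hypothesis pcharR2 : 2 \in [pchar R].

Lemma omega_expr2 a b : ((a, b) : omega_ring) ^+ 2 = (a ^+ 2 + b ^+ 2, b ^+ 2).
Proof.
rewrite expr2 omega_mulE /omega_mul /= !(oppr_pchar2 pcharR2) (mulrC b a).
by rewrite addrr_pchar2 // add0r -!expr2.
Qed.

Lemma omega_expr2n_even n a b : ~~ odd n ->
  ((a, b) : omega_ring) ^+ (2 ^ n) = (a ^+ (2 ^ n), b ^+ (2 ^ n)).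
Proof.
move=> n_even; rewrite -(odd_double_half n) (negbTE n_even) add0n -mul2n expnM.
elim: n./2 => [|j IHj]; first by rewrite !expr1.
rewrite expnSr !exprM IHj (omega_expr2 (a ^+ _)) omega_expr2.
by rewrite (@exprD_pchar2 _ 1 _ _ pcharR2) -addrA addrr_pchar2 // addr0.
Qed.

End OmegaRing.

Section CharTwoCubicField.

Variables (F : finFieldType) (k l : nat).
Hypotheses (k_gt0 : (0 < k)%N) (cardF : #|F| = ((2 ^ k) ^ 3)%N)
  (coprime_kl : coprime (2 ^ k - 1) (2 ^ l + 1)).

Local Notation q := (2 ^ k)%N.
Local Notation Q := (2 ^ l)%N.

Lemma pchar2F : 2 \in [pchar F].
Proof. by apply: (card_finPcharP (n := (k * 3)%N)); rewrite // expnM. Qed.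

Lemma expr_q3 (x : F) : x ^+ (q ^ 3) = x.
Proof. by rewrite -cardF expf_card. Qed.

Lemma exprq_q (x : F) : x ^+ q ^+ q = x ^+ (q ^ 2).
Proof. by rewrite -exprM mulnn. Qed.

Lemma exprq2_q (x : F) : x ^+ (q ^ 2) ^+ q = x.
Proof. by rewrite -exprM -expnSr expr_q3. Qed.

Lemma exprQ_q (x : F) : x ^+ Q ^+ q = x ^+ q ^+ Q.
Proof. exact: exprAC. Qed.

Definition frobQ (r : omega_ring F) : omega_ring F := (r.1 ^+ Q, r.2 ^+ Q).

Lemma mul_frobQ_inj : injective (fun r : omega_ring F => r * frobQ r).
Proof.
have [M [l' [M_even dvd_M l'_even def_l' co_Ml']]] :=
  exists_even_exponents k_gt0 coprime_kl.
have expr_3k (a : F) : a ^+ (2 ^ (3 * k)) = a by rewrite mulnC expnM expr_q3.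
have fixM (a : F) : a ^+ (2 ^ M) = a.
  case/dvdnP: dvd_M => j ->; rewrite mulnC expnM.
  by elim: j => [|j IHj]; rewrite ?expr1 // expnSr exprM IHj expr_3k.
have fixM_omega (r : omega_ring F) : r ^+ (2 ^ M) = r.
  by case: r => a b; rewrite omega_expr2n_even ?pchar2F // !fixM.
have norm (r : omega_ring F) : r * frobQ r = r ^+ (2 ^ l' + 1).
  case: r => a b; rewrite addn1 exprSr mulrC omega_expr2n_even ?pchar2F //.
  by case: def_l' => ->; rewrite // expnD !exprM !expr_3k.
move=> r s /= rs; apply: (expr_fixed_inj (N := 2 ^ M) (e := 2 ^ l' + 1)) => //.
- by rewrite expn_gt0.
- by rewrite addn1.
- by rewrite coprime_sym -subn1.
by rewrite -!norm.
Qed.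

Definition rtrace (x : F) := x + x ^+ q + x ^+ (q ^ 2).

Definition resolvent (x : F) : omega_ring F :=
  (x ^+ q + x ^+ (q ^ 2), x ^+ (q ^ 2) + x).

Lemma rtrace_expr_q x : rtrace x ^+ q = rtrace x.
Proof. by rewrite !exprD_pchar2 ?pchar2F // exprq_q exprq2_q addrC addrA. Qed.

Lemma rtrace_add_resolvent x : rtrace x + (resolvent x).1 = x.
Proof. by rewrite /rtrace -(addrA x) -addrA addrr_pchar2 ?pchar2F // addr0. Qed.

Lemma injective_of_rtrace_resolvent (phi : F -> F) (U : omega_ring F -> F)
    (G : F -> omega_ring F) :
  (forall x, phi x = rtrace x ^+ (Q + 1) + U (resolvent x)) ->
  (forall x, resolvent x * frobQ (resolvent x) = G (phi x)) ->
  injective phi.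
Proof.
move=> phiE normE x y phi_xy.
have res_xy : resolvent x = resolvent y.
  by apply: mul_frobQ_inj; rewrite /= !normE phi_xy.
have tr_xy : rtrace x = rtrace y.
  apply: (expr_fixed_inj (N := q) (e := Q + 1)); rewrite ?rtrace_expr_q //.
  - by rewrite expn_gt0.
  - by rewrite addn1.
  - by rewrite coprime_sym -subn1.
  by apply: (addIr (U (resolvent x))); rewrite -phiE res_xy -phiE.
by rewrite -(rtrace_add_resolvent x) -(rtrace_add_resolvent y) tr_xy res_xy.
Qed.

Lemma permutes_of_form (f : {poly F}) (E : F -> F -> F -> F -> F -> F -> F)
    (u : omega_ring F -> omega_ring F -> F) (G : F -> F -> F -> omega_ring F) :
  (forall x, f.[x] =
     E x (x ^+ q) (x ^+ (q ^ 2)) (x ^+ Q) (x ^+ q ^+ Q) (x ^+ (q ^ 2) ^+ Q)) ->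
  (forall x0 x1 x2 y0 y1 y2, E x0 x1 x2 y0 y1 y2 ^+ q =
     E (x0 ^+ q) (x1 ^+ q) (x2 ^+ q) (y0 ^+ q) (y1 ^+ q) (y2 ^+ q)) ->
  (forall x0 x1 x2 y0 y1 y2, E x0 x1 x2 y0 y1 y2 =
     (x0 + x1 + x2) * (y0 + y1 + y2) + u (x1 + x2, x2 + x0) (y1 + y2, y2 + y0)) ->
  (forall x0 x1 x2 y0 y1 y2,
     ((x1 + x2, x2 + x0) : omega_ring F) * (y1 + y2, y2 + y0) =
     G (E x0 x1 x2 y0 y1 y2) (E x1 x2 x0 y1 y2 y0) (E x2 x0 x1 y2 y0 y1)) ->
  permutes f.
Proof.
move=> fE E_q E_split E_norm; apply: injF_bij.
have frobQ_res x : frobQ (resolvent x) =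
    (x ^+ q ^+ Q + x ^+ (q ^ 2) ^+ Q, x ^+ (q ^ 2) ^+ Q + x ^+ Q).
  by rewrite /frobQ /= !exprD_pchar2 ?pchar2F.
have f_q x : f.[x] ^+ q =
    E (x ^+ q) (x ^+ (q ^ 2)) x (x ^+ q ^+ Q) (x ^+ (q ^ 2) ^+ Q) (x ^+ Q).
  by rewrite fE E_q !exprQ_q exprq_q exprq2_q.
have f_q2 x : f.[x] ^+ (q ^ 2) =
    E (x ^+ (q ^ 2)) x (x ^+ q) (x ^+ (q ^ 2) ^+ Q) (x ^+ Q) (x ^+ q ^+ Q).
  by rewrite -exprq_q f_q E_q !exprQ_q exprq_q exprq2_q.
apply: (injective_of_rtrace_resolvent (U := fun r => u r (frobQ r))
          (G := fun z => G z (z ^+ q) (z ^+ (q ^ 2)))) => x.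
  rewrite fE E_split frobQ_res /rtrace exprD expr1 mulrC.
  by rewrite !exprD_pchar2 ?pchar2F.
by rewrite frobQ_res f_q f_q2 fE -E_norm.
Qed.

(* Each witness [w] is half the difference of the two sides, computed over the
   integers. *)
Lemma permutes_f1 : permutes (f1 F q Q).
Proof.
apply: (permutes_of_form
  (E := fun x0 x1 x2 y0 y1 y2 => y2 * x1 + y1 * x2 + y0 * x0)
  (u := fun r s => r.1 * s.1 + r.1 * s.2 + r.2 * s.1)
  (G := fun z0 z1 z2 => (z0 + z1, z0 + z2)))
  => [x | x0 x1 x2 y0 y1 y2 | x0 x1 x2 y0 y1 y2 | x0 x1 x2 y0 y1 y2].
- by rewrite /f1 !hornerE !exprD !exprM expr1.
- by rewrite ?(oppr_pchar2 pchar2F) !exprD_pchar2 ?pchar2F // !exprMn.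
- apply: (eq_pchar2 pchar2F (w := - x0 * y1 - x0 * y2 - x1 * y0 - x1 * y1
                                - x1 * y2 - x2 * y0 - x2 * y1 - 2%:R * x2 * y2)).
  by rewrite /=; ring.
rewrite omega_mulE /omega_mul /=; congr pair.
  apply: (eq_pchar2 pchar2F (w := - x0 * y0 - x0 * y2 - x2 * y0)).
  by ring.
apply: (eq_pchar2 pchar2F (w := - x0 * y0)).
by ring.
Qed.

Lemma permutes_f2 : permutes (f2 F q Q).
Proof.
apply: (permutes_of_form
  (E := fun x0 x1 x2 y0 y1 y2 => y2 * x0 + y1 * x0 + y0 * x2 + y0 * x1 - y0 * x0)
  (u := fun r s => r.1 * s.1)
  (G := fun z0 z1 z2 => (z0 + z1, z0 + z2)))
  => [x | x0 x1 x2 y0 y1 y2 | x0 x1 x2 y0 y1 y2 | x0 x1 x2 y0 y1 y2].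
- by rewrite /f2 !hornerE !exprD !exprM expr1.
- by rewrite ?(oppr_pchar2 pchar2F) !exprD_pchar2 ?pchar2F // !exprMn.
- apply: (eq_pchar2 pchar2F (w := - x0 * y0 - x1 * y1 - x1 * y2 - x2 * y1
                                - x2 * y2)).
  by rewrite /=; ring.
rewrite omega_mulE /omega_mul /=; congr pair.
  apply: (eq_pchar2 pchar2F (w := - x0 * y1 - x0 * y2 - x1 * y0 + x1 * y1
                                - x2 * y0)).
  by ring.
apply: (eq_pchar2 pchar2F (w := - x0 * y2 - x2 * y0 + x2 * y2)).
by ring.
Qed.

Lemma permutes_f3 : permutes (f3 F q Q).
Proof.
apply: (permutes_of_form
  (E := fun x0 x1 x2 y0 y1 y2 => y2 * x1 + y1 * x1 + y0 * x2 - y0 * x1 + y0 * x0)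
  (u := fun r s => r.2 * s.1)
  (G := fun z0 z1 z2 => (z1 + z2, z0 + z1)))
  => [x | x0 x1 x2 y0 y1 y2 | x0 x1 x2 y0 y1 y2 | x0 x1 x2 y0 y1 y2].
- by rewrite /f3 !hornerE !exprD !exprM expr1.
- by rewrite ?(oppr_pchar2 pchar2F) !exprD_pchar2 ?pchar2F // !exprMn.
- apply: (eq_pchar2 pchar2F (w := - x0 * y1 - x0 * y2 - x1 * y0 - x2 * y1
                                - x2 * y2)).
  by rewrite /=; ring.
rewrite omega_mulE /omega_mul /=; congr pair.
  apply: (eq_pchar2 pchar2F (w := - x0 * y0 - x0 * y1 - x2 * y0 + x2 * y1
                                - x2 * y2)).
  by ring.
apply: (eq_pchar2 pchar2F (w := - x0 * y0 + x1 * y0 - x1 * y1 - x2 * y0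
                              + x2 * y1)).
by ring.
Qed.

Lemma permutes_f4 : permutes (f4 F q Q).
Proof.
apply: (permutes_of_form
  (E := fun x0 x1 x2 y0 y1 y2 => y2 * x2 + y1 * x2 - y0 * x2 + y0 * x1 + y0 * x0)
  (u := fun r s => r.1 * s.1 + r.2 * s.1)
  (G := fun z0 z1 z2 => (z0 + z2, z1 + z2)))
  => [x | x0 x1 x2 y0 y1 y2 | x0 x1 x2 y0 y1 y2 | x0 x1 x2 y0 y1 y2].
- by rewrite /f4 !hornerE !exprD !exprM expr1.
- by rewrite ?(oppr_pchar2 pchar2F) !exprD_pchar2 ?pchar2F // !exprMn.
- apply: (eq_pchar2 pchar2F (w := - x0 * y1 - x0 * y2 - x1 * y1 - x1 * y2
                                - x2 * y0 - x2 * y1 - x2 * y2)).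
  by rewrite /=; ring.
rewrite omega_mulE /omega_mul /=; congr pair.
  apply: (eq_pchar2 pchar2F (w := - x0 * y0 - x0 * y2 - x1 * y0 + x1 * y2
                                - x2 * y2)).
  by ring.
apply: (eq_pchar2 pchar2F (w := - x0 * y0 + x0 * y1 - x0 * y2 - x1 * y1
                              + x1 * y2)).
by ring.
Qed.

End CharTwoCubicField.

Lemma horner_f_fixed (F : finFieldType) (q Q : nat) (c : F) :
  c ^+ q = c -> c ^+ (Q + 1) = 1 ->
  [/\ (f1 F q Q).[c] = (f1 F q Q).[1], (f2 F q Q).[c] = (f2 F q Q).[1],
      (f3 F q Q).[c] = (f3 F q Q).[1] & (f4 F q Q).[c] = (f4 F q Q).[1]].
Proof.
move=> cq; rewrite addn1 exprSr => cQ1.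
by split; rewrite /f1 /f2 /f3 /f4 !hornerE !exprD !exprM !expr1 !cq !cQ1 !expr1n !mulr1.
Qed.

Lemma permutes_root_unity_eq1 (F : finFieldType) (f : {poly F}) (g : nat) :
  (g %| #|F|.-1)%N -> (forall c : F, c ^+ g = 1 -> f.[c] = f.[1]) ->
  permutes f -> g = 1%N.
Proof.
move=> g_dvd f_c /bij_inj f_inj.
have F_gt1 := card_finNzRing_gt1 F.
have N_gt0 : (0 < #|F|.-1)%N by rewrite -ltnS prednK // ltnW.
have /hasP[z _ z_prim] : has #|F|.-1.-primitive_root (enum (predC1 (0 : F))).
  apply: cyclic.has_prim_root; rewrite ?enum_uniq // -?cardE ?cardC1 //.
  apply/allP => x; rewrite mem_enum /= => x_neq0; rewrite unity_rootE.
  by rewrite -(inj_eq (mulIf x_neq0)) -exprSr prednK ?expf_card ?mul1r // ltnW.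
have c_prim := dvdn_prim_root z_prim g_dvd.
have c1 : z ^+ (#|F|.-1 %/ g) = 1 by apply/f_inj/f_c/prim_expr_order.
by apply/eqP; rewrite -dvdn1 (prim_order_dvd c_prim) expr1 c1.
Qed.

Lemma gcdn_eq1_of_permutes (F : finFieldType) (q Q : nat) (f : {poly F}) :
  (0 < q)%N -> #|F| = (q ^ 3)%N ->
  (forall c : F, c ^+ q = c -> c ^+ (Q + 1) = 1 -> f.[c] = f.[1]) ->
  permutes f -> gcdn (q - 1) (Q + 1) = 1%N.
Proof.
move=> q_gt0 cardF f_c; apply: permutes_root_unity_eq1 => [|c cg].
  by rewrite cardF (dvdn_trans (dvdn_gcdl _ _)) // subn1 predn_exp dvdn_mulr.
have c_dvd e : (gcdn (q - 1) (Q + 1) %| e)%N -> c ^+ e = 1.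
  by case/dvdnP=> j ->; rewrite mulnC exprM cg expr1n.
apply: f_c; last exact/c_dvd/dvdn_gcdr.
by rewrite -{1}(subnK q_gt0) exprD c_dvd ?dvdn_gcdl // mul1r.
Qed.

Local Close Scope ring_scope.

Theorem corollary1p2 (p k l : nat) (F : finFieldType) :
  prime p -> (0 < k)%N -> #|F| = (p ^ k) ^ 3 ->
  let q := (p ^ k)%N in let Q := (p ^ l)%N in
  [/\ (gcdn (q - 1) (Q + 1) = 1%N <-> (p = 2%N /\ ord_le (ord2 k) (ord2 l))),
      (gcdn (q - 1) (Q + 1) = 1%N <-> permutes (f1 F q Q)),
      (gcdn (q - 1) (Q + 1) = 1%N <-> permutes (f2 F q Q)),
      (gcdn (q - 1) (Q + 1) = 1%N <-> permutes (f3 F q Q)) &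
      (gcdn (q - 1) (Q + 1) = 1%N <-> permutes (f4 F q Q))].
Proof.
move=> p_pr k_gt0 cardF q Q.
have gcd_iff := gcdn_subn1_addn1_eq1 l p_pr k_gt0.
have permutes_all : gcdn (q - 1) (Q + 1) = 1 ->
    [/\ permutes (f1 F q Q), permutes (f2 F q Q),
        permutes (f3 F q Q) & permutes (f4 F q Q)].
  move=> /[dup] /gcd_iff[p2 _]; rewrite /q /Q p2 in cardF * => /eqP co.
  by split; [exact: permutes_f1 | exact: permutes_f2 | exact: permutes_f3
            | exact: permutes_f4].
have q_gt0 : 0 < q by rewrite expn_gt0 prime_gt0.
split; first exact: gcd_iff.
all: split=> [/permutes_all[] // | ]; apply: gcdn_eq1_of_permutes => // c cq cQ.
all: by case: (horner_f_fixed cq cQ).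
Qed.
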